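(* Let $\mathbb{X}$ be a finite set, $\mathcal{H}_A$ a finite-dimensional Hilbert space, and $\{\rho_A^x\}_{x\in\mathbb{X}}$ density operators on $\mathcal{H}_A$. Then the barycentric quantum Rényi leakage satisfies $\mathcal{B}(X\rightarrow A)_{\rho_A}=\log(\mu^\star)$, where $\mu^\star$ is the optimal value of the optimization problem \[ \min_{\pi\in\Delta(\mathbb{X}),\,\mu\in\mathbb{R}}\ \mu\quad\text{subject to}\quad \rho_A^x\leq\mu\sum_{x'\in\mathbb{X}}\pi(x')\rho_A^{x'}\ \ \text{for all }x\in\mathbb{X} \] (operator inequalities).
   Context: All logarithms are base 2. $\Delta(\mathbb{X})$ is the set of probability mass functions on $\mathbb{X}$. For a density operator $\rho$ and positive semi-definite $\sigma$, $\widetilde{D}_\infty(\rho\|\sigma)=\log\big(\inf\{\mu\in\mathbb{R}:\rho\leq\mu\sigma\}\big)$ ($+\infty$ if the support of $\rho$ is not contained in that of $\sigma$). The barycentric quantum Rényi leakage is $\mathcal{B}(X\rightarrow A)_{\rho_A}=\min_{\pi\in\Delta(\mathbb{X})}\max_{x\in\mathbb{X}}\widetilde{D}_\infty\big(\rho_A^x\,\|\,\sum_{x'}\pi(x')\rho_A^{x'}\big)$. *)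

From HB Require Import structures.
From mathcomp Require Import all_boot all_order all_algebra.
From mathcomp Require Import all_classical all_reals all_analysis.
From mathcomp Require Import complex.

Set Implicit Arguments.
Unset Strict Implicit.
Unset Printing Implicit Defensive.

Import Order.TTheory GRing.Theory Num.Theory.
Local Open Scope ring_scope.
Local Open Scope classical_set_scope.

Section Quantum.
Variable R : realType.
Local Notation C := (R[i]).

Definition log2 (x : R) : R := ln x / ln 2.

Definition adj {m n} (A : 'M[C]_(m, n)) : 'M[C]_(n, m) := (map_mx conjc A)^T.

(* positive semi-definite: Hermitian and <v, A v> >= 0 for all v
   (the order on C = R[i] is: x <= y iff y - x is real and nonnegative) *)
Definition psdmx {d} (A : 'M[C]_d) : Prop :=
  adj A = A /\ forall v : 'cV[C]_d, 0 <= (adj v *m A *m v) 0 0.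

Definition loewner {d} (A B : 'M[C]_d) : Prop := psdmx (B - A).

Definition density {d} (rho : 'M[C]_d) : Prop := psdmx rho /\ \tr rho = 1.

(* support (range = column space) of rho contained in that of sigma *)
Definition supp_sub {d} (rho sigma : 'M[C]_d) : bool := (rho^T <= sigma^T)%MS.

Definition Dmax {d} (rho sigma : 'M[C]_d) : \bar R :=
  if supp_sub rho sigma
  then (log2 (inf [set mu : R | loewner rho ((mu%:C)%C *: sigma)]))%:E
  else +oo%E.

Definition pmfs (X : finType) : set (X -> R) :=
  [set pi | (forall x, 0 <= pi x) /\ \sum_(x : X) pi x = 1].

Definition mixture {X : finType} {d} (pi : X -> R) (rho : X -> 'M[C]_d) : 'M[C]_d :=
  \sum_(x : X) ((pi x)%:C)%C *: rho x.

Definition barycentric_leakage {X : finType} {d} (rho : X -> 'M[C]_d) : \bar R :=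
  ereal_inf [set (\big[maxe/-oo%E]_(x : X) Dmax (rho x) (mixture pi rho))
            | pi in @pmfs X].

Definition sdp_value {X : finType} {d} (rho : X -> 'M[C]_d) : R :=
  inf [set mu : R | exists2 pi, @pmfs X pi &
         forall x, loewner (rho x) ((mu%:C)%C *: mixture pi rho)].

End Quantum.

From HB Require Import structures.
From mathcomp Require Import all_boot all_order all_algebra.
From mathcomp Require Import all_classical all_reals all_analysis.
From mathcomp Require Import complex.
From mathcomp Require Import sesquilinear spectral ring.

Set Implicit Arguments.
Unset Strict Implicit.
Unset Printing Implicit Defensive.

Import Order.TTheory GRing.Theory Num.Theory.
Local Open Scope ring_scope.
Local Open Scope classical_set_scope.

(* For positive semidefinite [rho] and [sigma], the set [{mu | rho <= mu sigma}]
   is nonempty exactly when [supp rho] is contained in [supp sigma]: in an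
   eigenbasis of [sigma] both conditions say that [rho] vanishes on the rows and
   columns of the kernel of [sigma]. Hence [D_oo(rho || sigma)] is [log] of the
   infimum of that set, read as [+oo] when the set is empty. When [rho] and
   [sigma] are density operators these sets are up-closed subsets of [[1, +oo)]
   (compare traces). For up-closed sets the largest infimum is the infimum of
   the intersection, and [log] is increasing and continuous, so the min-max
   defining the leakage collapses to [log] of the infimum of the union over
   [pi] of the intersections over [x]: the optimal value of the SDP. *)

Section PositiveSemidefinite.
Variable R : realType.
Local Notation C := (R[i]).

Lemma adjE m n (A : 'M[C]_(m, n)) i j : adj A i j = (A j i)^*.
Proof. by rewrite !mxE. Qed.

Lemma adjK m n (A : 'M[C]_(m, n)) : adj (adj A) = A.
Proof. by apply/matrixP => i j; rewrite !adjE conjCK. Qed.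

Lemma adjD m n (A B : 'M[C]_(m, n)) : adj (A + B) = adj A + adj B.
Proof. by apply/matrixP => i j; rewrite !(adjE, mxE) rmorphD. Qed.

Lemma adjB m n (A B : 'M[C]_(m, n)) : adj (A - B) = adj A - adj B.
Proof. by apply/matrixP => i j; rewrite !(adjE, mxE) rmorphB. Qed.

Lemma adjZ m n c (A : 'M[C]_(m, n)) : adj (c *: A) = c^* *: adj A.
Proof. by apply/matrixP => i j; rewrite !(adjE, mxE) rmorphM. Qed.

Lemma adjM m n p (A : 'M[C]_(m, n)) (B : 'M[C]_(n, p)) :
  adj (A *m B) = adj B *m adj A.
Proof. by rewrite /adj map_mxM trmx_mul. Qed.

Lemma adj_delta m n i j : adj (delta_mx i j : 'M[C]_(m, n)) = delta_mx j i.
Proof. by apply/matrixP => a b; rewrite adjE !mxE conjC_nat andbC. Qed.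

Lemma trmxC_adj m n (A : 'M[C]_(m, n)) : (A ^t* )%sesqui = adj A.
Proof. by rewrite /adj map_trmx. Qed.

(* [conjc_real] is stated for [conjc], which [^*] unfolds to but does not
   match syntactically. *)
Lemma conjC_realc (a : R) : (a%:C)%C^* = (a%:C)%C.
Proof. exact: conjc_real. Qed.

Definition sform n (A : 'M[C]_n) (u v : 'cV[C]_n) : C := (adj u *m A *m v) 0 0.

Definition qform n (A : 'M[C]_n) (v : 'cV[C]_n) : C := sform A v v.

Lemma sformDl n (A : 'M[C]_n) u v w :
  sform A (u + v) w = sform A u w + sform A v w.
Proof. by rewrite /sform adjD !mulmxDl mxE. Qed.

Lemma sformDr n (A : 'M[C]_n) u v w :
  sform A u (v + w) = sform A u v + sform A u w.
Proof. by rewrite /sform mulmxDr mxE. Qed.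

Lemma sformZl n (A : 'M[C]_n) c u v : sform A (c *: u) v = c^* * sform A u v.
Proof. by rewrite /sform adjZ -!scalemxAl mxE. Qed.

Lemma sformZr n (A : 'M[C]_n) c u v : sform A u (c *: v) = c * sform A u v.
Proof. by rewrite /sform -scalemxAr mxE. Qed.

Lemma sform_delta n (A : 'M[C]_n) i j :
  sform A (delta_mx i 0) (delta_mx j 0) = A i j.
Proof. by rewrite /sform adj_delta -rowE -colE !mxE. Qed.

Lemma qformD n (A B : 'M[C]_n) v : qform (A + B) v = qform A v + qform B v.
Proof. by rewrite /qform /sform mulmxDr mulmxDl mxE. Qed.

Lemma qformB n (A B : 'M[C]_n) v : qform (A - B) v = qform A v - qform B v.
Proof. by rewrite /qform /sform mulmxBr mulmxBl !mxE. Qed.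

Lemma qformZ n c (A : 'M[C]_n) v : qform (c *: A) v = c * qform A v.
Proof. by rewrite /qform /sform -scalemxAr -scalemxAl mxE. Qed.

Lemma qform_conj n m (P : 'M[C]_(m, n)) (A : 'M[C]_n) w :
  qform (P *m A *m adj P) w = qform A (adj P *m w).
Proof. by rewrite /qform /sform adjM adjK !mulmxA. Qed.

Lemma qform_delta n (A : 'M[C]_n) i : qform A (delta_mx i 0) = A i i.
Proof. exact: sform_delta. Qed.

Lemma qform_delta2 n (A : 'M[C]_n) x i j :
  qform A (x *: delta_mx i 0 + delta_mx j 0) =
  x^* * x * A i i + x^* * A i j + x * A j i + A j j.
Proof.
rewrite /qform sformDl !sformDr !sformZl !sformZr !sform_delta.
by rewrite mulrA addrA.
Qed.

Lemma qform_expand n (A : 'M[C]_n) w :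
  qform A w = \sum_i \sum_j (w i 0)^* * A i j * w j 0.
Proof.
rewrite /qform /sform mxE exchange_big; apply: eq_bigr => j _.
by rewrite mxE mulr_suml; apply: eq_bigr => i _; rewrite adjE.
Qed.

Lemma qform_diag n (s : 'rV[C]_n) w :
  qform (diag_mx s) w = \sum_i s 0 i * `|w i 0| ^+ 2.
Proof.
rewrite /qform /sform mul_mx_diag mxE; apply: eq_bigr => i _.
by rewrite !mxE normCK; ring.
Qed.

Lemma psdmx0 n : psdmx (0 : 'M[C]_n).
Proof.
split; first by apply/matrixP => i j; rewrite adjE !mxE conjC0.
by move=> v; rewrite mulmx0 mul0mx mxE.
Qed.

Lemma psdmxD n (A B : 'M[C]_n) : psdmx A -> psdmx B -> psdmx (A + B).
Proof.
move=> [hA pA] [hB pB]; split; first by rewrite adjD hA hB.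
by move=> v; rewrite -[leRHS]/(qform _ v) qformD; exact: addr_ge0 (pA v) (pB v).
Qed.

Lemma psdmxZ n (a : R) (A : 'M[C]_n) :
  0 <= a -> psdmx A -> psdmx ((a%:C)%C *: A).
Proof.
move=> a_ge0 [hA pA]; split; first by rewrite adjZ conjC_realc hA.
move=> v; rewrite -[leRHS]/(qform _ v) qformZ.
by apply: mulr_ge0 (pA v); rewrite ler0c.
Qed.

Lemma psdmx_sum (I : finType) n (P : pred I) (F : I -> 'M[C]_n) :
  (forall i, P i -> psdmx (F i)) -> psdmx (\sum_(i | P i) F i).
Proof. by apply: big_ind; [exact: psdmx0 | exact: psdmxD]. Qed.

Lemma psdmx_conj m n (P : 'M[C]_(m, n)) (A : 'M[C]_n) :
  psdmx A -> psdmx (P *m A *m adj P).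
Proof.
move=> [hA pA]; split; first by rewrite !adjM adjK hA mulmxA.
by move=> w; rewrite -[leRHS]/(qform _ w) qform_conj; exact: pA.
Qed.

Lemma psdmx_diag n (s : 'rV[C]_n) :
  (forall i, 0 <= s 0 i) -> psdmx (diag_mx s).
Proof.
move=> s_ge0; split.
  apply/matrixP => i j; rewrite adjE !mxE eq_sym.
  case: eqP => [->|_]; rewrite ?mulr1n ?mulr0n ?conjC0 //.
  exact/CrealP/ger0_real.
move=> w; rewrite -[leRHS]/(qform _ w) qform_diag; apply: sumr_ge0 => i _.
by rewrite mulr_ge0 ?exprn_ge0.
Qed.

Lemma psdmx_adj_entry n (A : 'M[C]_n) i j : psdmx A -> A j i = (A i j)^*.
Proof. by move=> [hA _]; rewrite -{1}hA adjE. Qed.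

Lemma psdmx_diag_ge0 n (A : 'M[C]_n) i : psdmx A -> 0 <= A i i.
Proof. by move=> [_ pA]; rewrite -qform_delta; exact: pA. Qed.

Lemma mxtrace_psdmx_ge0 n (A : 'M[C]_n) : psdmx A -> 0 <= \tr A.
Proof. by move=> pA; apply: sumr_ge0 => i _; exact: psdmx_diag_ge0. Qed.

(* The test vector [x e_i + e_j] makes the form negative unless [A i j = 0]. *)
Lemma psdmx_row0 n (A : 'M[C]_n) i j : psdmx A -> A i i = 0 -> A i j = 0.
Proof.
move=> pA Aii0; apply/eqP; apply: contraT => Aij_neq0.
have cAij_neq0 : (A i j)^* != 0 by rewrite conjC_eq0.
have Ajj_ge0 := psdmx_diag_ge0 j pA.
have cAjj : (A j j)^* = A j j by apply/CrealP/ger0_real.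
pose x := - (A j j + 1) / (A i j)^*.
have cx : x^* = - (A j j + 1) / A i j.
  by rewrite rmorphM rmorphN rmorphD rmorph1 fmorphV /= cAjj conjCK.
have := pA.2 (x *: delta_mx i 0 + delta_mx j 0).
rewrite -[leRHS]/(qform _ _) qform_delta2 Aii0 (psdmx_adj_entry i j pA).
have -> : x^* * x * 0 + x^* * A i j + x * (A i j)^* + A j j = - (A j j + 2).
  by rewrite cx /x; field; rewrite Aij_neq0 cAij_neq0.
have Ajj2_gt0 : 0 < A j j + 2 by rewrite ltr_wpDl.
by rewrite oppr_ge0 => /(lt_le_trans Ajj2_gt0); rewrite ltxx.
Qed.

Lemma psdmx_spectral n (S : 'M[C]_n) : psdmx S ->
  exists (P : 'M[C]_n) (s : 'rV[C]_n),
  [/\ P *m adj P = 1%:M, adj P *m P = 1%:M, S = adj P *m diag_mx s *m P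
    & forall i, 0 <= s 0 i].
Proof.
move=> pS; suff [P [s [PP' P'P eS]]] : exists (P : 'M[C]_n) (s : 'rV[C]_n),
    [/\ P *m adj P = 1%:M, adj P *m P = 1%:M & S = adj P *m diag_mx s *m P].
  exists P, s; split => // i.
  have -> : s 0 i = (P *m S *m adj P) i i.
    by rewrite eS !mulmxA PP' mul1mx -mulmxA PP' mulmx1 mxE eqxx mulr1n.
  exact: psdmx_diag_ge0 (psdmx_conj P pS).
have /orthomx_spectralP eS : S \is normalmx.
  by apply/normalmxP; rewrite trmxC_adj pS.1.
have P_unitary := spectral_unitarymx S.
have P'E : invmx (spectralmx S) = adj (spectralmx S).
  by rewrite invmx_unitary // trmxC_adj.
exists (spectralmx S), (spectral_diag S); rewrite -P'E; split => //.
  by rewrite P'E -trmxC_adj; apply/unitarymxP.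
by rewrite mulVmx // spectral_unit.
Qed.

Lemma diag_mx_factorP n (A : 'M[C]_n) (s : 'rV[C]_n) :
  (exists K, A = diag_mx s *m K) <-> (forall i j, s 0 i = 0 -> A i j = 0).
Proof.
split => [[K ->] i j si0 | A0]; first by rewrite mul_diag_mx mxE si0 mul0r.
exists (diag_mx (\row_k (s 0 k)^-1) *m A).
apply/matrixP => i j; rewrite !mul_diag_mx !mxE.
have [si0 | si_neq0] := eqVneq (s 0 i) 0; first by rewrite si0 mul0r A0.
by rewrite mulrA mulfV // mul1r.
Qed.

Lemma loewner_diag_row0 n (A : 'M[C]_n) (s : 'rV[C]_n) (mu : R) :
  psdmx A -> loewner A ((mu%:C)%C *: diag_mx s) ->
  forall i j, s 0 i = 0 -> A i j = 0.
Proof.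
move=> pA [_ dom] i j si0; apply: (psdmx_row0 _ pA).
apply/eqP; rewrite eq_le (psdmx_diag_ge0 i pA) andbT.
have := dom (delta_mx i 0).
rewrite -[leRHS]/(qform _ _) qformB qformZ !qform_delta.
by rewrite mxE eqxx mulr1n si0 mulr0 sub0r oppr_ge0.
Qed.

(* AM-GM on each term [w_i^* A_ij w_j], then
   [s_i |w_i|^2 <= qform (diag_mx s) w]. *)
Lemma qform_le_diag n (A : 'M[C]_n) (s : 'rV[C]_n) w :
  (forall i, 0 <= s 0 i) ->
  (forall i j, A i j != 0 -> s 0 i != 0 /\ s 0 j != 0) ->
  0 <= qform A w ->
  qform A w <=
    (\sum_i \sum_j `|A i j| * ((s 0 i)^-1 + (s 0 j)^-1)) * qform (diag_mx s) w.
Proof.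
move=> s_ge0 A_supp qA_ge0; set Q := qform (diag_mx s) w.
have wQ i : s 0 i != 0 -> `|w i 0| ^+ 2 <= (s 0 i)^-1 * Q.
  move=> si_neq0; rewrite -[leLHS](mulKf si_neq0) ler_wpM2l ?invr_ge0 //.
  rewrite /Q qform_diag (bigD1 i) //= lerDl; apply: sumr_ge0 => k _.
  by rewrite mulr_ge0 ?exprn_ge0.
rewrite -[qform A w]ger0_norm // qform_expand.
apply: le_trans (ler_norm_sum _ _ _) _; rewrite mulr_suml.
apply: ler_sum => i _; apply: le_trans (ler_norm_sum _ _ _) _.
rewrite mulr_suml; apply: ler_sum => j _.
rewrite !normrM norm_conjC.
have [-> | Aij_neq0] := eqVneq (A i j) 0.
  by rewrite normr0 !(mulr0, mul0r).
have [si_neq0 sj_neq0] := A_supp _ _ Aij_neq0.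
rewrite [`|w i 0| * _]mulrC -!mulrA ler_wpM2l //.
have amgm : `|w i 0| * `|w j 0| <= `|w i 0| ^+ 2 + `|w j 0| ^+ 2.
  apply: le_trans
    (real_leif_mean_square_scaled (normr_real _) (normr_real _)).1.
  by rewrite mulr2n lerDl mulr_ge0.
by apply: le_trans amgm _; rewrite mulrDl lerD ?wQ.
Qed.

Lemma row0_loewner_diag n (A : 'M[C]_n) (s : 'rV[C]_n) :
  psdmx A -> (forall i, 0 <= s 0 i) -> (forall i j, s 0 i = 0 -> A i j = 0) ->
  exists mu : R, loewner A ((mu%:C)%C *: diag_mx s).
Proof.
move=> pA s_ge0 A_row0.
have A_col0 i j : s 0 j = 0 -> A i j = 0.
  by move=> sj0; rewrite (psdmx_adj_entry j i pA) A_row0 ?conjC0.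
pose muC := \sum_i \sum_j `|A i j| * ((s 0 i)^-1 + (s 0 j)^-1).
have muC_ge0 : 0 <= muC.
  do 2![apply: sumr_ge0 => ? _]; rewrite mulr_ge0 ?addr_ge0 ?invr_ge0 //.
have /complex_realP [mu muE] := ger0_real muC_ge0.
exists mu; split.
  by rewrite adjB adjZ conjC_realc (psdmx_diag s_ge0).1 pA.1.
move=> w; rewrite -[leRHS]/(qform _ _) qformB qformZ subr_ge0 -muE.
apply: qform_le_diag => //; last exact: pA.2.
move=> i j Aij_neq0.
by split; apply: contra_neq Aij_neq0; [exact: A_row0 | exact: A_col0].
Qed.

Lemma supp_subP n (A B : 'M[C]_n) : supp_sub A B <-> exists K, A = B *m K.
Proof.
split => [/submxP [K eK] | [K ->]]; last by rewrite /supp_sub trmx_mul submxMl.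
by exists K^T; rewrite -[A]trmxK eK trmx_mul trmxK.
Qed.

Lemma factor_conj n (P A B : 'M[C]_n) : adj P *m P = 1%:M ->
  (exists K, A = B *m K) <-> (exists K, P *m A *m adj P = P *m B *m adj P *m K).
Proof.
move=> P'P; split => [[K ->] | [K eK]].
  by exists (P *m K *m adj P); rewrite !mulmxA -(mulmxA _ (adj P)) P'P mulmx1.
exists (adj P *m K *m P).
have -> : A = adj P *m (P *m A *m adj P) *m P.
  by rewrite !mulmxA P'P mul1mx -mulmxA P'P mulmx1.
by rewrite eK !mulmxA P'P mul1mx.
Qed.

Lemma loewner_conj n (P A B : 'M[C]_n) : adj P *m P = 1%:M ->
  loewner A B <-> loewner (P *m A *m adj P) (P *m B *m adj P).
Proof.
move=> P'P; rewrite /loewner -mulmxBl -mulmxBr.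
split => [/(psdmx_conj P) // | /(psdmx_conj (adj P))].
by rewrite adjK !mulmxA P'P mul1mx -mulmxA P'P mulmx1.
Qed.

Lemma supp_sub_loewnerP n (rho S : 'M[C]_n) : psdmx rho -> psdmx S ->
  supp_sub rho S <-> exists mu : R, loewner rho ((mu%:C)%C *: S).
Proof.
move=> prho pS; have [P [s [PP' P'P eS s_ge0]]] := psdmx_spectral pS.
have eD : P *m S *m adj P = diag_mx s.
  by rewrite eS !mulmxA PP' mul1mx -mulmxA PP' mulmx1.
have eDZ (mu : R) : P *m ((mu%:C)%C *: S) *m adj P = (mu%:C)%C *: diag_mx s.
  by rewrite -scalemxAr -scalemxAl eD.
have prho' := psdmx_conj P prho.
split => [/supp_subP/(factor_conj _ _ P'P) | [mu /(loewner_conj _ _ P'P)]].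
  rewrite eD => /diag_mx_factorP /(row0_loewner_diag prho' s_ge0) [mu].
  by rewrite -eDZ => /(iffRL (loewner_conj _ _ P'P)) dom; exists mu.
rewrite eDZ => /(loewner_diag_row0 prho') /diag_mx_factorP.
by rewrite -eD => /(iffRL (factor_conj _ _ P'P)) /supp_subP.
Qed.

End PositiveSemidefinite.

Section InfLog.
Variable R : realType.

Lemma ler_log2 (a b : R) : 0 < a -> a <= b -> log2 a <= log2 b.
Proof.
move=> a_gt0 ab; rewrite /log2 ler_wpM2r ?invr_ge0 ?ln_ge0 ?ler1n //.
by rewrite ler_ln ?posrE // (lt_le_trans a_gt0 ab).
Qed.

(* [2 ^ r] is a lower bound of [S], hence of [inf S]. *)
Lemma lb_le_log2_inf (S : set R) (r : R) :
  S !=set0 -> (forall mu, S mu -> 0 < mu) ->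
  (forall mu, S mu -> r <= log2 mu) -> r <= log2 (inf S).
Proof.
move=> S_neq0 S_gt0 r_lb.
have ln2_gt0 : 0 < ln (2 : R) by rewrite ln_gt0 // ltr1n.
have exp_le_inf : expR (r * ln 2) <= inf S.
  apply: (lb_le_inf S_neq0) => mu Smu.
  have := r_lb _ Smu; rewrite /log2 ler_pdivlMr // => r_le.
  by rewrite -[mu]lnK ?posrE ?S_gt0 // ler_expR.
rewrite /log2 ler_pdivlMr // -[r * ln 2]expRK ler_ln ?posrE ?expR_gt0 //.
exact: lt_le_trans (expR_gt0 _) exp_le_inf.
Qed.

Lemma le_inf_subset (A B : set R) :
  B `<=` A -> B !=set0 -> has_lbound A -> inf A <= inf B.
Proof.
by move=> BA B_neq0 A_lb; apply: (lb_le_inf B_neq0) => b /BA; apply: ge_inf.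
Qed.

Lemma upclosed_gt_inf (S : set R) (a : R) :
  (forall x y, x <= y -> S x -> S y) -> has_inf S -> inf S < a -> S a.
Proof.
move=> S_up S_inf inf_lt; have a_gt : 0 < a - inf S by rewrite subr_gt0.
have [b Sb] := inf_adherent a_gt S_inf.
by rewrite addrC subrK => /ltW /S_up; apply.
Qed.

(* [inf set0] is [0], so the empty set is sent to [+oo] explicitly, as in
   [Dmax]. *)
Definition log2_inf (S : set R) : \bar R :=
  if `[< S !=set0 >] then (log2 (inf S))%:E else +oo%E.

Variable c : R.
Hypothesis c_gt0 : 0 < c.

Lemma lbound_inf_gt0 (S : set R) : S !=set0 -> lbound S c -> 0 < inf S.
Proof.
by move=> S_neq0 S_lb; apply: lt_le_trans c_gt0 (lb_le_inf S_neq0 S_lb).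
Qed.

Lemma bigmax_log2_inf (T : finType) (i0 : T) (M : T -> set R) :
  (forall i a b, a <= b -> M i a -> M i b) -> (forall i, lbound (M i) c) ->
  \big[maxe/-oo%E]_i log2_inf (M i) = log2_inf (\bigcap_i M i).
Proof.
move=> M_up M_lb.
have capM_lb : lbound (\bigcap_i M i) c by move=> a /(_ i0 I); apply: M_lb.
have [M_neq0 | /existsNP [i Mi_eq0]] := pselect (forall i, M i !=set0);
  last first.
  have capM_eq0 : ~ ((\bigcap_i M i) !=set0).
    by move=> [a /(_ i I) Mia]; apply: Mi_eq0; exists a.
  rewrite {2}/log2_inf asboolF //; apply/eqP; rewrite eq_le leey /=.
  by apply: le_trans (le_bigmax _ _ i); rewrite /log2_inf asboolF.
have M_inf i : has_inf (M i) by split => //; exists c.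
pose i1 := [arg max_(i > i0) inf (M i)]%O.
have inf_le_i1 i : inf (M i) <= inf (M i1).
  by rewrite /i1; case: arg_maxP => // j _; apply.
have capM_gt m : inf (M i1) < m -> (\bigcap_i M i) m.
  move=> i1_lt i _; apply: (upclosed_gt_inf (M_up i) (M_inf i)).
  exact: le_lt_trans (inf_le_i1 i) i1_lt.
have capM_neq0 : (\bigcap_i M i) !=set0.
  by exists (inf (M i1) + 1); apply: capM_gt; rewrite ltrDl.
rewrite {2}/log2_inf asboolT //; apply/le_anti/andP; split.
  apply: bigmax_le => [|i _]; first exact: leNye.
  rewrite /log2_inf asboolT // lee_fin.
  rewrite ler_log2 ?(lbound_inf_gt0 (M_neq0 i) (M_lb i)) //.
  by apply: (le_inf_subset _ capM_neq0) => [a /(_ i I) | ]; last exists c.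
apply: le_trans (le_bigmax _ _ i1); rewrite /log2_inf asboolT // lee_fin.
rewrite ler_log2 ?(lbound_inf_gt0 capM_neq0 capM_lb) //.
apply/ler_addgt0Pr => e e_gt0.
by apply: ge_inf; [exists c | apply: capM_gt; rewrite ltrDl].
Qed.

Lemma ereal_inf_log2_inf (I : Type) (P : set I) (T : I -> set R) :
  (forall i, P i -> lbound (T i) c) ->
  ereal_inf [set log2_inf (T i) | i in P] = log2_inf (\bigcup_(i in P) T i).
Proof.
move=> T_lb; set U := \bigcup_(i in P) T i; set L := ereal_inf _.
have U_lb : lbound U c by move=> a [i Pi]; apply: T_lb.
have [U_neq0 | U_eq0] := pselect (U !=set0); last first.
  rewrite /log2_inf asboolF //; apply/eqP; rewrite eq_le leey /=.
  apply/ereal_infP => _ [i Pi <-]; rewrite /log2_inf asboolF //.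
  by move=> [a Tia]; apply: U_eq0; exists a; exists i.
have L_le mu : U mu -> (L <= (log2 mu)%:E)%E.
  move=> [i Pi Timu]; have Ti_neq0 : T i !=set0 by exists mu.
  have Ti_lb := T_lb i Pi.
  apply: le_trans (ereal_inf_lbound (_ : _ (log2_inf (T i)))) _.
    by exists i.
  rewrite /log2_inf asboolT // lee_fin.
  rewrite ler_log2 ?(lbound_inf_gt0 Ti_neq0 Ti_lb) //.
  by apply: (ge_inf _ Timu); exists c.
rewrite /log2_inf asboolT //; apply/le_anti/andP; split.
  case LE : L => [r | | ]; last exact: leNye.
    rewrite lee_fin; apply: lb_le_log2_inf => // [mu /U_lb | mu Umu].
      exact: lt_le_trans c_gt0.
    by have := L_le _ Umu; rewrite LE lee_fin.
  by have [mu /L_le] := U_neq0; rewrite LE.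
apply/ereal_infP => _ [i Pi <-]; rewrite /log2_inf.
case: asboolP => [Ti_neq0 | _]; last exact: leey.
rewrite lee_fin ler_log2 ?(lbound_inf_gt0 U_neq0 U_lb) //.
by apply: (le_inf_subset _ Ti_neq0) => [a Tia | ]; [exists i | exists c].
Qed.

End InfLog.

Lemma Dmax_log2_inf (R : realType) n (rho sigma : 'M[R[i]]_n) :
  psdmx rho -> psdmx sigma ->
  Dmax rho sigma = log2_inf [set mu : R | loewner rho ((mu%:C)%C *: sigma)].
Proof.
move=> prho psigma; rewrite /Dmax /log2_inf.
have [supp | nsupp] := boolP (supp_sub rho sigma).
  by rewrite asboolT //; apply/(supp_sub_loewnerP prho psigma).
by rewrite asboolF // => /(supp_sub_loewnerP prho psigma); apply/negP.
Qed.

Section Density.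
Variable R : realType.
Local Notation C := (R[i]).

Lemma density_mixture (X : finType) n (pi : X -> R) (rho : X -> 'M[C]_n) :
  pmfs pi -> (forall x, density (rho x)) -> density (mixture pi rho).
Proof.
move=> [pi_ge0 pi_sum1] rho_dens; split.
  by apply: psdmx_sum => x _; apply: psdmxZ => //; exact: (rho_dens x).1.
rewrite /mixture raddf_sum (eq_bigr (fun x => (pi x)%:C%C)) => [|x _].
  by rewrite -rmorph_sum pi_sum1.
by rewrite /= mxtraceZ (rho_dens x).2 mulr1.
Qed.

Lemma loewner_density_ge1 n (rho sigma : 'M[C]_n) (mu : R) :
  density rho -> density sigma -> loewner rho ((mu%:C)%C *: sigma) -> 1 <= mu.
Proof.
move=> [_ tr_rho] [_ tr_sigma] /mxtrace_psdmx_ge0.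
rewrite raddfB /= mxtraceZ tr_rho tr_sigma mulr1.
by rewrite -(rmorph1 (real_complex R)) -rmorphB ler0c subr_ge0.
Qed.

Lemma loewner_scale_le n (rho sigma : 'M[C]_n) (mu mu' : R) :
  psdmx sigma -> mu <= mu' ->
  loewner rho ((mu%:C)%C *: sigma) -> loewner rho ((mu'%:C)%C *: sigma).
Proof.
move=> psigma le_mu dom; rewrite /loewner.
have -> : (mu'%:C)%C *: sigma - rho =
    ((mu%:C)%C *: sigma - rho) + ((mu' - mu)%:C)%C *: sigma.
  by rewrite rmorphB /= scalerBl [RHS]addrC addrA subrK.
by apply: psdmxD dom _; apply: psdmxZ; rewrite ?subr_ge0.
Qed.

Lemma loewner_sum (X : finType) n (rho : X -> 'M[C]_n) x :
  (forall y, psdmx (rho y)) -> loewner (rho x) (\sum_y rho y).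
Proof.
by move=> rho_psd; rewrite /loewner (bigD1 x) //= addrC addrK; apply: psdmx_sum.
Qed.

Lemma pmfs_uniform (X : finType) :
  (0 < #|X|)%N -> pmfs (fun _ : X => (#|X|%:R : R)^-1).
Proof.
move=> X_gt0; split=> [x|]; first by rewrite invr_ge0.
rewrite sumr_const -[#|xpredT|]/#|X| -(mulr_natr (#|X|%:R : R)^-1).
by rewrite mulVf // pnatr_eq0 -lt0n.
Qed.

Lemma loewner_mixture_uniform (X : finType) n (rho : X -> 'M[C]_n) x :
  (0 < #|X|)%N -> (forall y, psdmx (rho y)) ->
  loewner (rho x)
    (((#|X|%:R : R)%:C)%C *: mixture (fun=> (#|X|%:R : R)^-1) rho).
Proof.
move=> X_gt0 rho_psd; rewrite /mixture scaler_sumr.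
rewrite (eq_bigr (fun y => rho y)) => [|y _]; first exact: loewner_sum.
by rewrite scalerA -rmorphM /= mulfV ?rmorph1 ?scale1r // pnatr_eq0 -lt0n.
Qed.

End Density.

Theorem proposition2 (R : realType) (X : finType) (d : nat)
    (rho : X -> 'M[R[i]]_d) :
  (0 < #|X|)%N ->
  (forall x, density (rho x)) ->
  barycentric_leakage rho = ((log2 (sdp_value rho))%:E)%E.
Proof.
move=> X_gt0 rho_dens; have [x0 _] := card_gt0P X_gt0.
have rho_psd x : psdmx (rho x) := (rho_dens x).1.
pose M pi x := [set mu : R | loewner (rho x) ((mu%:C)%C *: mixture pi rho)].
have M_lb pi x : pmfs pi -> lbound (M pi x) 1.
  move=> pi_pmf mu; apply: loewner_density_ge1 (rho_dens x) _.
  exact: density_mixture pi_pmf rho_dens.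
rewrite /barycentric_leakage.
rewrite (eq_imagel (f' := fun pi => log2_inf (\bigcap_x M pi x))); last first.
  move=> pi pi_pmf; have mix_psd := (density_mixture pi_pmf rho_dens).1.
  rewrite -(bigmax_log2_inf ltr01 x0) => [||x]; last exact: M_lb.
    by apply: eq_bigr => x _; apply: Dmax_log2_inf.
  by move=> x a b; apply: loewner_scale_le.
rewrite (ereal_inf_log2_inf ltr01) => [|pi pi_pmf mu /(_ x0 I)]; last first.
  exact: M_lb.
rewrite /log2_inf asboolT; last first.
  exists #|X|%:R, (fun=> #|X|%:R^-1); first exact: pmfs_uniform.
  by move=> x _; apply: loewner_mixture_uniform.
rewrite /sdp_value; congr (log2 (inf _))%:E; apply/seteqP.
by split=> mu [pi pi_pmf dom]; exists pi => // x;
  [exact: dom | move=> _; exact: dom].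
Qed.
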